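(* Let $\Sigma$ be a ranked alphabet, $B$ a strong bimonoid and $\mathcal{A}=(Q,\delta,F)$ a $(\Sigma,B)$-wta such that $\mathcal{N}(\mathcal{A})$ is finite. Let $U_{\mathcal{A}}$ be the set of all crisp-deterministic $(\Sigma,B)$-wta $\mathcal{B}$ such that for every $q\in Q$ there is a final variant $\mathcal{B}'$ of $\mathcal{B}$ with $h^q_{\mathrm{V}(\mathcal{A})}=[\![\mathcal{B}']\!]^{\mathrm{init}}$. Then $\mathrm{rel}(\mathcal{N}(\mathcal{A}))$ is minimal in $U_{\mathcal{A}}$ with respect to the number of states, i.e., $\mathrm{rel}(\mathcal{N}(\mathcal{A}))\in U_{\mathcal{A}}$ and no element of $U_{\mathcal{A}}$ has fewer states.
   Context: Ranked alphabet $\Sigma$ ($\Sigma^{(0)}\ne\emptyset$), trees $T_\Sigma$; strong bimonoid $(B,\oplus,\otimes,\mathbb{0},\mathbb{1})$ (commutative monoid $(B,\oplus,\mathbb{0})$, monoid $(B,\otimes,\mathbb{1})$, $\mathbb{0}\ne\mathbb{1}$, $\mathbb{0}$ absorbing, no distributivity). $(\Sigma,B)$-wta $\mathcal{A}=(Q,\delta,F)$: $Q$ finite nonempty (the states), $\delta_k:Q^k\times\Sigma^{(k)}\times Q\to B$, $F:Q\to B$. Vector algebra $\mathrm{V}(\mathcal{A})=(B^Q,\delta_{\mathcal{A}})$, $\delta_{\mathcal{A}}(\sigma)(v_1,\dots,v_k)_q=\bigoplus_{p_1,\dots,p_k}\big(\bigotimes_{i=1}^k(v_i)_{p_i}\big)\otimes\delta_k(p_1\dots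 p_k,\sigma,q)$; $h_{\mathrm{V}(\mathcal{A})}:T_\Sigma\to B^Q$ the unique homomorphism; $h^q_{\mathrm{V}(\mathcal{A})}(\xi)=h_{\mathrm{V}(\mathcal{A})}(\xi)_q$; $[\![\mathcal{A}]\!]^{\mathrm{init}}(\xi)=\bigoplus_q h_{\mathrm{V}(\mathcal{A})}(\xi)_q\otimes F_q$. Crisp-deterministic: for all $k,\sigma\in\Sigma^{(k)},q_1,\dots,q_k$ a unique $q$ with $\delta_k(q_1\dots q_k,\sigma,q)=\mathbb{1}$, all other values $\mathbb{0}$. A final variant of $(Q,\delta,F)$ is $(Q,\delta,F')$ with arbitrary $F':Q\to B$. Nerode algebra $\mathcal{N}(\mathcal{A})=(Q_{\mathcal{N}},\theta_{\mathcal{N}},F_{\mathcal{N}})$: smallest subalgebra of $\mathrm{V}(\mathcal{A})$ (carrier $\mathrm{im}(h_{\mathrm{V}(\mathcal{A})})$) with $(F_{\mathcal{N}})_v=\bigoplus_q v_q\otimes F_q$; finite if $Q_{\mathcal{N}}$ finite. For a finite $(\Sigma,B)$-algebra $(P,\theta,G)$, $\mathrm{rel}(P,\theta,G)$ is the crisp-deterministic wta $(P,\delta',G)$ with $\delta'_k(p_1\dots p_k,\sigma,p)=\mathbb{1}$ iff $\theta(\sigma)(p_1,\dots,p_k)=p$, else $\mathbb{0}$. *)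

From HB Require Import structures.
From mathcomp Require Import all_boot.
From mathcomp Require Import boolp.
From Stdlib Require List.

Set Implicit Arguments.
Unset Strict Implicit.
Unset Printing Implicit Defensive.

(* No distributivity is assumed.                                          *)
Record strong_bimonoid (B : Type) := StrongBimonoid {
  sb_add : B -> B -> B;
  sb_mul : B -> B -> B;
  sb_zero : B;
  sb_one : B;
  sb_addA : associative sb_add;
  sb_addC : commutative sb_add;
  sb_add0 : left_id sb_zero sb_add;
  sb_mulA : associative sb_mul;
  sb_mul1l : left_id sb_one sb_mul;
  sb_mul1r : right_id sb_one sb_mul;
  sb_mul0l : left_zero sb_zero sb_mul;
  sb_mul0r : right_zero sb_zero sb_mul;
  sb_zero_neq_one : sb_zero <> sb_one
}.

Inductive tree (Sigma : Type) (rk : Sigma -> nat) : Type :=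
  Node (a : Sigma) of ('I_(rk a) -> tree rk).
Arguments Node {Sigma rk} a _.

(* delta_k(p_1 ... p_k, a, q) with k = rk a and ps = (p_1,...,p_k).       *)
(* Nonemptiness of Q is imposed separately (wta_nonempty).                *)
Record wta (Sigma : finType) (rk : Sigma -> nat) (B : Type) := Wta {
  st : finType;
  delta : forall a : Sigma, {ffun 'I_(rk a) -> st} -> st -> B;
  fin : st -> B
}.
Arguments Wta {Sigma rk B} st delta fin.
Arguments st {Sigma rk B} w.
Arguments delta {Sigma rk B} w a _ _.
Arguments fin {Sigma rk B} w _.

Definition wta_nonempty Sigma rk B (A : @wta Sigma rk B) : Prop :=
  0 < #|st A|.

Definition vdelta Sigma rk B (S : strong_bimonoid B) (A : @wta Sigma rk B)
  (a : Sigma) (vs : 'I_(rk a) -> (st A -> B)) : st A -> B :=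
  fun q => \big[sb_add S / sb_zero S]_(ps : {ffun 'I_(rk a) -> st A})
             sb_mul S (\big[sb_mul S / sb_one S]_(i < rk a) vs i (ps i))
                      (delta A a ps q).
Arguments vdelta {Sigma rk B} S A {a} vs _.

Fixpoint hV Sigma rk B (S : strong_bimonoid B) (A : @wta Sigma rk B)
  (t : tree rk) : st A -> B :=
  match t with
  | Node a ts => vdelta S A (fun i => @hV Sigma rk B S A (ts i))
  end.
Arguments hV {Sigma rk B} S A t _.

Definition run_init Sigma rk B (S : strong_bimonoid B) (A : @wta Sigma rk B)
  (t : tree rk) : B :=
  \big[sb_add S / sb_zero S]_(q : st A) sb_mul S (hV S A t q) (fin A q).

Definition crisp_deterministic Sigma rk B (S : strong_bimonoid B)
  (A : @wta Sigma rk B) : Prop :=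
  forall (a : Sigma) (ps : {ffun 'I_(rk a) -> st A}),
    exists q : st A, delta A a ps q = sb_one S /\
      forall q' : st A, q' <> q -> delta A a ps q' = sb_zero S.

Definition final_variant Sigma rk B (A : @wta Sigma rk B) (F' : st A -> B)
  : @wta Sigma rk B := Wta (st A) (delta A) F'.
Arguments final_variant {Sigma rk B} A F'.

Definition in_UA Sigma rk B (S : strong_bimonoid B)
  (A Bw : @wta Sigma rk B) : Prop :=
  wta_nonempty Bw /\ crisp_deterministic S Bw /\
  forall q : st A, exists F' : st Bw -> B,
    forall t : tree rk, hV S A t q = run_init S (final_variant Bw F') t.

(* Nerode algebra N(A): carrier im(h_{V(A)}) (a subset of B^Q).           *)
Definition nerode_finite Sigma rk B (S : strong_bimonoid B)
  (A : @wta Sigma rk B) : Prop :=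
  exists s : seq (st A -> B), forall t : tree rk, List.In (hV S A t) s.

Definition in_image Sigma rk B (S : strong_bimonoid B) (A : @wta Sigma rk B)
  (v : {classic (st A -> B)}) : bool :=
  `[< exists t : tree rk, hV S A t = v >].
Arguments in_image {Sigma rk B} S A v.

Definition nerode_list Sigma rk B (S : strong_bimonoid B) (A : @wta Sigma rk B)
  : seq {classic (st A -> B)} :=
  match pselect (nerode_finite S A) with
  | left H => undup [seq v <- (sval (cid H) : seq {classic (st A -> B)})
                     | in_image S A v]
  | right _ => [::]
  end.

Definition nerode_states Sigma rk B (S : strong_bimonoid B)
  (A : @wta Sigma rk B) : finType := seq_sub (nerode_list S A).

(* rel(N(A)) = (Q_N, delta', F_N), where delta'(v_1..v_k, a, v) = 1 iff
   theta_N(a)(v_1,..,v_k) = v, theta_N being the restriction of delta_A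
   to Q_N, and (F_N)_v = (+)_q v_q (x) F_q. *)
Definition rel_nerode Sigma rk B (S : strong_bimonoid B) (A : @wta Sigma rk B)
  : @wta Sigma rk B :=
  Wta (nerode_states S A)
    (fun a ps p =>
       if ((vdelta S A (fun i => (val (ps i) : st A -> B))
              : {classic (st A -> B)}) == val p)
       then sb_one S else sb_zero S)
    (fun p => \big[sb_add S / sb_zero S]_(q : st A)
                 sb_mul S ((val p : st A -> B) q) (fin A q)).

(* In a crisp-deterministic automaton every tree t reaches a single state s(t):
   h(t) is the indicator vector of s(t), because the vector algebra applied to
   indicator vectors just reads off delta.  In rel(N(A)) the state reached on t
   is h_V(A)(t) itself, so the final weights F'_q(v) = v_q recover every h^q.
   Conversely, if a crisp-deterministic C with final variants F'_q lies in U_A,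
   then h_V(A)(t) = (F'_q(s(t)))_q is a function of the state s(t) of C, so C
   has at least as many states as the image of h_V(A), the carrier of N(A). *)

From HB Require Import structures.
From mathcomp Require Import all_boot.
From mathcomp Require Import boolp.

Section StrongBimonoidBigops.
Variables (B : Type) (S : strong_bimonoid B).

HB.instance Definition _ := Monoid.isComLaw.Build B (sb_zero S) (sb_add S)
  (@sb_addA _ S) (@sb_addC _ S) (@sb_add0 _ S).

Lemma sb_sum_only {T : finType} {F : T -> B} x0 :
  (forall x, x != x0 -> F x = sb_zero S) ->
  \big[sb_add S/sb_zero S]_x F x = F x0.
Proof. by move=> F0; rewrite (bigD1 x0) //= big1 ?Monoid.mulm1. Qed.

Lemma sb_prod_eq0 {n} {F : 'I_n -> B} i :
  F i = sb_zero S -> \big[sb_mul S/sb_one S]_(j < n) F j = sb_zero S.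
Proof.
elim: n F i => [|n IHn] F i Fi0; first by case: i {Fi0}.
rewrite big_ord_recl; move: Fi0; case: (unliftP ord0 i) => [j ->|->] Fi0.
  by rewrite (IHn _ j Fi0) sb_mul0r.
by rewrite Fi0 sb_mul0l.
Qed.

Lemma sb_prod_eq1 {n} {F : 'I_n -> B} :
  (forall i, F i = sb_one S) -> \big[sb_mul S/sb_one S]_(j < n) F j = sb_one S.
Proof.
move=> F1; apply: (big_ind (fun x => x = sb_one S)) => // x y -> ->.
exact: sb_mul1l.
Qed.

Definition sb_indicator {T : eqType} (s p : T) : B :=
  if p == s then sb_one S else sb_zero S.

Lemma sb_sum_indicatorl (T : finType) (s : T) (F : T -> B) :
  \big[sb_add S/sb_zero S]_p sb_mul S (sb_indicator s p) (F p) = F s.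
Proof.
rewrite (sb_sum_only s) => [|p /negbTE neq_ps]; rewrite /sb_indicator.
  by rewrite eqxx sb_mul1l.
by rewrite neq_ps sb_mul0l.
Qed.

End StrongBimonoidBigops.

Arguments sb_sum_only {B S T F}.
Arguments sb_prod_eq0 {B S n F}.
Arguments sb_indicator {B} S {T} s p.

Section IndicatorRuns.
Variables (Sigma : finType) (rk : Sigma -> nat) (B : Type)
  (S : strong_bimonoid B) (W : @wta Sigma rk B).

Lemma vdelta_indicator a (c : {ffun 'I_(rk a) -> st W}) :
  vdelta S W (fun i => sb_indicator S (c i)) = delta W a c.
Proof.
apply: funext => p; rewrite /vdelta (sb_sum_only c) => [|ps neq_ps_c].
  by rewrite sb_prod_eq1 ?sb_mul1l // => i; rewrite /sb_indicator eqxx.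
have /existsP [i neq_i] : [exists i, ps i != c i].
  apply: contra_neqT neq_ps_c => /existsPn eq_ps_c.
  by apply/ffunP => i; apply/eqP/negPn/eq_ps_c.
by rewrite (sb_prod_eq0 i) ?sb_mul0l // /sb_indicator (negbTE neq_i).
Qed.

Lemma crisp_deterministicP :
  crisp_deterministic S W <->
  forall a ps, exists s, delta W a ps = sb_indicator S s.
Proof.
split=> crispW a ps; have [s] := crispW a ps.
  case=> delta_s delta_other; exists s; apply: funext => p.
  by rewrite /sb_indicator; case: eqP => [->|/delta_other].
move=> ->; exists s; rewrite /sb_indicator eqxx.
by split=> // p /eqP /negbTE ->.
Qed.

Lemma hV_crisp : crisp_deterministic S W ->
  forall t, exists s, hV S W t = sb_indicator S s.
Proof.
move=> /crisp_deterministicP crispW; elim=> a ts IHts.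
pose c := [ffun i => sval (cid (IHts i))].
have [s delta_s] := crispW a c.
exists s; rewrite -delta_s -vdelta_indicator /=.
congr (vdelta S W); apply: funext => i.
by rewrite ffunE; case: (cid (IHts i)).
Qed.

Lemma hV_final_variant F' t : hV S (final_variant W F') t = hV S W t.
Proof.
elim: t => a ts IHts /=.
by congr (vdelta S _); apply: funext => i; apply: IHts.
Qed.

Lemma run_init_final_variant F' t s :
  hV S W t = sb_indicator S s -> run_init S (final_variant W F') t = F' s.
Proof. by move=> hV_t; rewrite /run_init hV_final_variant hV_t sb_sum_indicatorl. Qed.

End IndicatorRuns.

Arguments vdelta_indicator {Sigma rk B} S {W a} c.
Arguments hV_crisp {Sigma rk B S W}.
Arguments run_init_final_variant {Sigma rk B S W F' t s}.

Lemma mem_In (T : eqType) (x : T) (s : seq T) : List.In x s -> x \in s.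
Proof. by elim: s => //= y s IHs [->|/IHs x_s]; rewrite inE ?eqxx ?x_s ?orbT. Qed.

Section NerodeAlgebra.
Variables (Sigma : finType) (rk : Sigma -> nat) (B : Type)
  (S : strong_bimonoid B) (A : @wta Sigma rk B).
Hypothesis nerodeA : nerode_finite S A.

Lemma nerode_list_uniq : uniq (nerode_list S A).
Proof. by rewrite /nerode_list; case: pselect => // fin; apply: undup_uniq. Qed.

Lemma mem_nerode_list (v : {classic (st A -> B)}) :
  reflect (exists t, hV S A t = v) (v \in nerode_list S A).
Proof.
rewrite /nerode_list; case: pselect => [fin|/(_ nerodeA) []].
rewrite mem_undup mem_filter.
case: (cid fin) => s in_s /=; apply: (iffP andP) => [[/asboolP //]|[t hV_t]].
split; first by apply/asboolP; exists t.
by rewrite -hV_t; apply/mem_In/in_s.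
Qed.

Lemma card_nerode_states : #|nerode_states S A| = size (nerode_list S A).
Proof. exact/card_seq_sub/nerode_list_uniq. Qed.

Definition nerode_state (t : tree rk) : st (rel_nerode S A) :=
  @SeqSub _ (nerode_list S A) (hV S A t)
    (introT (mem_nerode_list _) (ex_intro _ t erefl)).

Lemma nerode_state_surj (p : st (rel_nerode S A)) : exists t, nerode_state t = p.
Proof.
have /mem_nerode_list [t hV_t] := ssvalP p.
by exists t; apply: val_inj.
Qed.

Lemma hV_rel_nerode t : hV S (rel_nerode S A) t = sb_indicator S (nerode_state t).
Proof.
elim: t => a ts IHts /=.
pose c := [ffun i => nerode_state (ts i)].
have -> : (fun i => hV S (rel_nerode S A) (ts i)) = fun i => sb_indicator S (c i).
  by apply: funext => i; rewrite IHts ffunE.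
rewrite vdelta_indicator; apply: funext => p /=.
have -> : (fun i => ssval (c i)) = fun i => hV S A (ts i).
  by apply: funext => i; rewrite ffunE.
by rewrite /sb_indicator -val_eqE eq_sym.
Qed.

Lemma crisp_rel_nerode : crisp_deterministic S (rel_nerode S A).
Proof.
apply/crisp_deterministicP => a ps.
pose ts i := sval (cid (nerode_state_surj (ps i))).
have -> : ps = [ffun i => nerode_state (ts i)].
  by apply/ffunP => i; rewrite ffunE /ts; case: (cid _) => t; apply: esym.
exists (nerode_state (Node a ts)).
rewrite -hV_rel_nerode -(vdelta_indicator S) /=; congr (vdelta S (rel_nerode S A)).
by apply: funext => i; rewrite ffunE hV_rel_nerode.
Qed.

Lemma rel_nerode_nonempty (a : Sigma) : rk a = 0 -> wta_nonempty (rel_nerode S A).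
Proof.
move=> rk_a0; apply/card_gt0P.
have leaf : tree rk by apply: (Node a) => -[i]; rewrite rk_a0.
by exists (nerode_state leaf).
Qed.

Lemma in_UA_rel_nerode : (exists a, rk a = 0) -> in_UA S A (rel_nerode S A).
Proof.
case=> a /rel_nerode_nonempty nonempty.
split=> //; split; first exact: crisp_rel_nerode.
move=> q; exists (fun p : st (rel_nerode S A) => ssval p q) => t.
by rewrite (run_init_final_variant (hV_rel_nerode t)).
Qed.

Lemma card_rel_nerode_le (T : finType) (g : T -> {classic (st A -> B)}) :
  (forall t, exists s, hV S A t = g s) -> #|st (rel_nerode S A)| <= #|T|.
Proof.
move=> hV_g; rewrite card_nerode_states cardE -(size_map g).
apply: uniq_leq_size => [|v /mem_nerode_list [t <-]]; first exact: nerode_list_uniq.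
by have [s ->] := hV_g t; apply: map_f; rewrite mem_enum.
Qed.

Lemma in_UA_card_le (W : @wta Sigma rk B) :
  in_UA S A W -> #|st (rel_nerode S A)| <= #|st W|.
Proof.
case=> _ [crispW finalW].
pose F' q := sval (cid (finalW q)).
apply: (@card_rel_nerode_le _ (fun s q => F' q s)) => t.
have [s hV_s] := hV_crisp crispW t.
exists s; apply: funext => q.
rewrite -(run_init_final_variant hV_s) /F'.
by case: (cid (finalW q)) => F_q F_qP; apply: F_qP.
Qed.

End NerodeAlgebra.

Theorem theorem6p9 (Sigma : finType) (rk : Sigma -> nat)
  (HSigma0 : exists a : Sigma, rk a = 0%N)
  (B : Type) (S : strong_bimonoid B) (A : @wta Sigma rk B)
  (HA : wta_nonempty A)
  (Hfin : nerode_finite S A) :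
  in_UA S A (rel_nerode S A) /\
  forall Bw : @wta Sigma rk B, in_UA S A Bw ->
    #|st (rel_nerode S A)| <= #|st Bw|.
Proof.
split; first exact: in_UA_rel_nerode Hfin HSigma0.
by move=> Bw; apply: in_UA_card_le Hfin Bw.
Qed.
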